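(* Let $k_+,k_-$ be integers with $0\leq k_-\leq k_+\leq 3$ and $k_++k_-\geq 1$, and set $\alpha \triangleq \max\{2k_+^2,3\}$. Let $D \geq 2$ and $K\geq 1$ be integers, and let $p\equiv\pm 5\pmod{12}$ be a prime such that $(\alpha K+1)^D \leq p$. For each integer $0\leq m < DK^2$ define \[C_m\triangleq \Big\{ x= \sum_{i=0}^{D-1} x_i (\alpha K+1)^i : x_i\in\mathbb{Z},\ 0\leq x_i\leq K,\ \sum_{i=0}^{D-1}x_i^2=m \Big\}. \] Let $G \triangleq \mathbb{Z}_{3k_++2k_-+1} \times \mathbb{Z}_p\times \mathbb{Z}_p$ and \[ S_m\triangleq \{ s_x : x \in C_m \}, \quad \text{where } s_x \triangleq (1,x \bmod p,x^2 \bmod p) \in G.\] Then $G\geq M\diamond_2 S_m$ for every $0\leq m < DK^2$, where $M\triangleq [-k_-,k_+]^*$.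
   Context: $[a,b]=\{a,a+1,\dots,b\}$ and $[a,b]^*=[a,b]\setminus\{0\}$. For a finite Abelian group $G$, a finite set $M\subseteq\mathbb{Z}\setminus\{0\}$ and $S=\{s_1,\dots,s_n\}\subseteq G$, we write $G\ge M\diamond_t S$ if the elements $\mathbf{e}\cdot(s_1,\dots,s_n)=\sum_i e_is_i$, over all $\mathbf{e}\in(M\cup\{0\})^n$ with $1\le\mathrm{wt}(\mathbf{e})\le t$, are all distinct and non-zero in $G$ (here $e_is_i$ is the $e_i$-fold group multiple and $\mathrm{wt}$ the Hamming weight). *)

From HB Require Import structures.
From mathcomp Require Import all_boot all_order all_algebra.
Set Implicit Arguments. Unset Strict Implicit. Unset Printing Implicit Defensive.
Import Order.TTheory GRing.Theory Num.Theory.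
Local Open Scope ring_scope.

(* S = {s_1,...,s_n} is given as a duplicate-free sequence; e ranges over
   coefficient vectors indexed by positions 'I_n (n = size S). *)
Definition wt (n : nat) (e : {ffun 'I_n -> int}) : nat :=
  #|[set i | e i != 0]|.

Definition admissible (n : nat) (M : {pred int}) (t : nat)
    (e : {ffun 'I_n -> int}) : Prop :=
  (forall i, e i != 0 -> e i \in M) /\ (1 <= wt e <= t)%N.

Definition combo (G : zmodType) (S : seq G) (e : {ffun 'I_(size S) -> int}) : G :=
  \sum_(i < size S) S`_i *~ e i.

Definition diamond (G : zmodType) (M : {pred int}) (t : nat) (S : seq G) : Prop :=
  forall e e' : {ffun 'I_(size S) -> int},
    admissible M t e -> admissible M t e' ->
    combo e != 0 /\ (e != e' -> combo e != combo e').

Definition Mset (kp km : nat) : {pred int} :=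
  [pred z : int | (- (km%:Z) <= z <= kp%:Z) && (z != 0)].

Definition alpha (kp : nat) : nat := maxn (2 * kp ^ 2) 3.

Definition Gtype (kp km p : nat) : zmodType :=
  ('Z_(3 * kp + 2 * km + 1) * 'Z_p * 'Z_p)%type.

Definition s_x (kp km p : nat) (x : nat) : Gtype kp km p :=
  (1, x%:R, (x ^ 2)%N%:R).

Definition Cval (kp K D : nat) (xs : {ffun 'I_D -> 'I_K.+1}) : nat :=
  \sum_(i < D) (xs i : nat) * (alpha kp * K + 1) ^ i.

Definition C_m (kp K D m : nat) : seq nat :=
  undup [seq Cval kp xs | xs : {ffun 'I_D -> 'I_K.+1} <- enum {ffun 'I_D -> 'I_K.+1}
                        & (\sum_(i < D) (xs i : nat) ^ 2)%N == m].

Definition S_m (kp km p K D m : nat) : seq (Gtype kp km p) :=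
  undup [seq s_x kp km p x | x <- C_m kp K D m].

From HB Require Import structures.
From mathcomp Require Import all_boot all_order all_algebra.
From mathcomp Require Import fingroup cyclic finfield.
From mathcomp Require Import ring lra zify.
Set Implicit Arguments. Unset Strict Implicit. Unset Printing Implicit Defensive.
Import Order.TTheory GRing.Theory Num.Theory.
Local Open Scope ring_scope.

(* Write X, Y, Z, W for elements of C_m and x, y, z, w for their digit vectors. An equality
   u1 s_X + u2 s_Y = v1 s_Z + v2 s_W of weight-2 combinations gives u1 + u2 = v1 + v2 (the
   first modulus exceeds every such difference) and the congruences
   u1 X + u2 Y = v1 Z + v2 W and u1 X^2 + u2 Y^2 = v1 Z^2 + v2 W^2 modulo p.
   The digits lie in [0, K], the base is b = alpha K + 1 and b^D <= p, so the linear
   congruence, whose coefficients sum to zero, lifts to u1 x + u2 y = v1 z + v2 w in Z^D.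
   As the digit vectors lie on the sphere |x|^2 = m, taking norms yields
   u1 u2 |x - y|^2 = v1 v2 |z - w|^2, while the congruences give
   u1 u2 (X - Y)^2 = v1 v2 (Z - W)^2 modulo p. If u1 u2 <> v1 v2, the first identity forces
   u1 u2 v1 v2 > 0, a finite check over [-3, 3] then gives u1 u2 v1 v2 = 12, and the second
   makes 3 a square modulo p, which fails for p = +-5 mod 12. The cases u1 + u2 = 0 and
   u1 u2 = v1 v2 are settled by lifting further linear congruences and by the parallelogram
   law. *)

Lemma gt3_of_mod12 (p : nat) : ((p %% 12 == 5) || (p %% 12 == 7))%N -> (3 < p)%N.
Proof. by case/orP=> /eqP; lia. Qed.

(** * 3 is not a square modulo p *)

Section ThreeNonResidue.
Variable p : nat.
Hypothesis p_pr : prime p.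
Local Notation F := 'F_p.

Lemma Fp_unit_of_order (d : nat) : (0 < d)%N -> (d %| p.-1)%N ->
  exists u : {unit F}, #[u]%g = d.
Proof.
move=> d_gt0 d_dvd.
have /cyclicP [g def_units] := field_unit_group_cyclic [set: {unit F}]%G.
have og : #[g]%g = p.-1 by rewrite orderE -def_units card_finField_unit card_Fp.
have d_dvd' : (d %| #[g]%g)%N by rewrite og.
exists (g ^+ (#[g] %/ d))%g.
by rewrite orderXdiv ?dvdn_div // divnA // mulKn ?divnK // -og ?divn_gt0.
Qed.

Lemma Fp_natr_eq0 n : ((n%:R : F) == 0) = (p %| n)%N.
Proof. by rewrite -(dvdn_pcharf (pchar_Fp p_pr)). Qed.

Lemma Fp_natr_neq0 n : (0 < n < p)%N -> (n%:R : F) != 0.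
Proof. by case/andP=> n_gt0 n_lt; rewrite Fp_natr_eq0 gtnNdvd. Qed.

Lemma Fp_fermat (x : F) : x ^+ p = x.
Proof. by have := expf_card x; rewrite card_Fp. Qed.

Lemma val_unitX (u : {unit F}) n : val (u ^+ n)%g = val u ^+ n.
Proof. by elim: n => // n IH; rewrite expgS exprS -IH. Qed.

Lemma Fp_sqr_neqN1 (x : F) : (p %% 4 = 3)%N -> x ^+ 2 != -1.
Proof.
move=> p4; apply/eqP => x2.
have two_neq0 : (2%:R : F) != 0 by rewrite Fp_natr_neq0 //; have := prime_gt1 p_pr; lia.
have def_p : p = (4 * (p %/ 4) + 3)%N by lia.
have : x ^+ (4 * (p %/ 4) + 3) = x by rewrite -def_p Fp_fermat.
rewrite exprD exprM (exprM x 2 2) x2 sqrrN !expr1n mul1r exprS x2 mulrN1 => /eqP.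
rewrite -subr_eq0 -opprD oppr_eq0 -mulr2n -mulr_natl mulf_eq0 (negPf two_neq0) /=.
by move=> /eqP x0; move: x2; rewrite x0 expr0n /= => /eqP; rewrite eq_sym oppr_eq0 oner_eq0.
Qed.

Lemma Fp_sqr_neqN3 (x : F) : (2 < p)%N -> (p %% 3 = 2)%N -> x ^+ 2 != - 3%:R.
Proof.
move=> p_gt2 p3; apply/eqP => x2.
have two_neq0 : (2%:R : F) != 0 by rewrite Fp_natr_neq0 //; lia.
have four_neq0 : (4%:R : F) != 0 by rewrite Fp_natr_neq0 //; lia.
have three_neq0 : (3%:R : F) != 0 by rewrite Fp_natr_eq0 dvdn_prime2 //; lia.
(* [w] is a primitive cube root of unity, which cannot exist when 3 does not divide p - 1. *)
pose w := (x - 1) / 2%:R.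
have w2 : w ^+ 2 + w + 1 = 0.
  rewrite (_ : w ^+ 2 + w + 1 = (x ^+ 2 + 3%:R) / (2%:R * 2%:R)); last first.
    by rewrite /w; field; rewrite four_neq0 two_neq0.
  by rewrite x2 addNr mul0r.
have w3 : w ^+ 3 = 1.
  apply/eqP; rewrite -subr_eq0 (_ : w ^+ 3 - 1 = (w - 1) * (w ^+ 2 + w + 1)); last by ring.
  by rewrite w2 mulr0.
have def_p : p = (3 * (p %/ 3) + 2)%N by lia.
have : w ^+ (3 * (p %/ 3) + 2) = w by rewrite -def_p Fp_fermat.
rewrite exprD exprM w3 expr1n mul1r => /eqP.
rewrite -subr_eq0 (_ : w ^+ 2 - w = w * (w - 1)); last by ring.
rewrite mulf_eq0 subr_eq0 => /orP [] /eqP w_eq; move: w2; rewrite w_eq.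
  by rewrite expr0n /= !add0r => /eqP; rewrite oner_eq0.
rewrite expr1n (_ : 1 + 1 + 1 = 3%:R :> F); last by ring.
by move/eqP; rewrite (negPf three_neq0).
Qed.

Lemma Fp_sqrtN1 : (p %% 4 = 1)%N -> exists x : F, x ^+ 2 = -1.
Proof.
move=> p4; have [|u ou] := @Fp_unit_of_order 4 isT; first by apply/dvdnP; exists (p %/ 4)%N; lia.
exists (val u).
have u4 : val u ^+ 4 = 1 by rewrite -val_unitX -ou expg_order.
have u2 : val u ^+ 2 != 1.
  apply: contraTneq isT => u2; have : (u ^+ 2 == 1)%g by apply/eqP/val_inj; rewrite val_unitX u2.
  by rewrite -order_dvdn ou.
apply/eqP; move: u4 => /eqP; rewrite -subr_eq0.
rewrite (_ : val u ^+ 4 - 1 = (val u ^+ 2 - 1) * (val u ^+ 2 + 1)); last by ring.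
by rewrite mulf_eq0 subr_eq0 (negPf u2) addr_eq0.
Qed.

Lemma Fp_sqrtN3 : (p %% 3 = 1)%N -> exists x : F, x ^+ 2 = - 3%:R.
Proof.
move=> p3; have [|u ou] := @Fp_unit_of_order 3 isT; first by apply/dvdnP; exists (p %/ 3)%N; lia.
have u3 : val u ^+ 3 = 1 by rewrite -val_unitX -ou expg_order.
have u1 : val u != 1.
  apply: contraTneq isT => u1; have : (u ^+ 1 == 1)%g.
    by apply/eqP/val_inj; rewrite val_unitX u1 expr1.
  by rewrite -order_dvdn ou.
have u_root : val u ^+ 2 + val u + 1 = 0.
  move: u3 => /eqP; rewrite -subr_eq0.
  rewrite (_ : val u ^+ 3 - 1 = (val u - 1) * (val u ^+ 2 + val u + 1)); last by ring.
  by rewrite mulf_eq0 subr_eq0 (negPf u1) => /eqP.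
exists (2%:R * val u + 1).
rewrite (_ : _ ^+ 2 = 4%:R * (val u ^+ 2 + val u + 1) - 3%:R); last by ring.
by rewrite u_root mulr0 sub0r.
Qed.

Lemma Fp_sqr_neq3 (x : F) : ((p %% 12 == 5) || (p %% 12 == 7))%N -> x ^+ 2 != 3%:R.
Proof.
move=> p12; apply/eqP => x2.
(* 3 = (-1) * (-3), and exactly one of -1 and -3 is a square modulo p. *)
have x_neq0 : x != 0.
  apply: contraTneq isT => x0; move: x2; rewrite x0 expr0n /= => /esym/eqP.
  by rewrite Fp_natr_eq0 dvdn_prime2 //; lia.
case/orP: p12 => /eqP p12.
- have [i i2] := Fp_sqrtN1 ltac:(lia).
  have := Fp_sqr_neqN3 (i * x) ltac:(lia) ltac:(lia).
  by rewrite exprMn i2 x2 mulN1r eqxx.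
- have [y y2] := Fp_sqrtN3 ltac:(lia).
  have := Fp_sqr_neqN1 (y / x) ltac:(lia).
  by rewrite expr_div_n y2 x2 mulNr divff ?eqxx // -x2 sqrf_eq0.
Qed.
End ThreeNonResidue.

Lemma dvdz_sqr_sub3 (p : nat) (U W : int) : prime p ->
  ((p %% 12 == 5) || (p %% 12 == 7))%N -> (p %| U ^+ 2 - 3 * W ^+ 2)%Z -> (p %| W)%Z.
Proof.
move=> p_pr p12; rewrite !(dvdz_pcharf (pchar_Fp p_pr)) rmorphB !rmorphM /= subr_eq0.
move=> /eqP UW; apply: contraTT isT => W_neq0.
have := Fp_sqr_neq3 p_pr ((U%:~R : 'F_p) / W%:~R) p12.
by rewrite expr_div_n !expr2 UW mulrK ?eqxx // unitfE mulf_neq0.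
Qed.

Lemma Euclid_dvdzM (p : nat) (a c : int) : prime p ->
  (p%:Z %| a * c)%Z = (p%:Z %| a)%Z || (p%:Z %| c)%Z.
Proof. by move=> p_pr; rewrite !dvdzE abszM Euclid_dvdM. Qed.

Lemma dvdz_small (d : nat) (z : int) : `|z| < d%:Z -> (d%:Z %| z)%Z = (z == 0).
Proof.
move=> z_lt; apply/idP/eqP => [|->]; last exact: dvdz0.
rewrite dvdzE /=; apply: contraTeq => z_neq0; rewrite gtnNdvd ?absz_gt0 //.
Qed.

Definition small_coefs : seq int := [:: -3; -2; -1; 1; 2; 3].

Lemma mem_small_coefs (u : int) : u != 0 -> `|u| <= 3 -> u \in small_coefs.
Proof. by move=> u_neq0 u_le3; rewrite !inE; lia. Qed.

Lemma prod_products_eq12 (u1 u2 v1 v2 : int) : {subset [:: u1; u2; v1; v2] <= small_coefs} ->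
  u1 + u2 = v1 + v2 -> u1 + u2 != 0 -> u1 * u2 != v1 * v2 -> 0 < u1 * u2 * (v1 * v2) ->
  u1 * u2 * (v1 * v2) = 12.
Proof.
have all_ok : all (fun u1 => all (fun u2 => all (fun v1 => all (fun v2 =>
    [==> u1 + u2 == v1 + v2, u1 + u2 != 0, u1 * u2 != v1 * v2, 0 < u1 * u2 * (v1 * v2)
     => u1 * u2 * (v1 * v2) == 12]) small_coefs) small_coefs) small_coefs) small_coefs.
  by vm_compute.
move=> coefs_in sum_eq s_neq0 prod_neq pos; apply/eqP.
have [u1_in u2_in v1_in v2_in] : [/\ u1 \in small_coefs, u2 \in small_coefs,
    v1 \in small_coefs & v2 \in small_coefs] by split; apply: coefs_in; rewrite !inE eqxx ?orbT.
move: (allP all_ok u1 u1_in) => /allP/(_ u2 u2_in)/allP/(_ v1 v1_in)/allP/(_ v2 v2_in).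
by rewrite sum_eq eqxx -sum_eq s_neq0 prod_neq pos.
Qed.

Lemma dvdz_of_distinct_products (p : nat) (u1 u2 v1 v2 A B s t : int) : prime p ->
  ((p %% 12 == 5) || (p %% 12 == 7))%N -> {subset [:: u1; u2; v1; v2] <= small_coefs} ->
  u1 + u2 = v1 + v2 -> u1 + u2 != 0 -> u1 * u2 != v1 * v2 ->
  u1 * u2 * s = v1 * v2 * t -> 0 < s -> 0 < t ->
  (p %| u1 * u2 * A ^+ 2 - v1 * v2 * B ^+ 2)%Z -> (p %| B)%Z.
Proof.
move=> p_pr p12 coefs_in sum_eq s_neq0 prod_neq prod_rel s_gt0 t_gt0 AB_dvd.
have coef_neq0 u : u \in [:: u1; u2; v1; v2] -> u != 0.
  by move=> /coefs_in; rewrite !inE; lia.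
have u12_neq0 : u1 * u2 != 0 by rewrite mulf_neq0 ?coef_neq0 // !inE eqxx ?orbT.
have pos : 0 < u1 * u2 * (v1 * v2).
  rewrite -(pmulr_lgt0 _ (mulr_gt0 s_gt0 t_gt0)).
  rewrite (_ : _ * (s * t) = (u1 * u2 * s) ^+ 2); last by rewrite expr2 {2}prod_rel; ring.
  by rewrite exprn_even_gt0 //= mulf_neq0 // gt_eqF.
have prod12 := prod_products_eq12 coefs_in sum_eq s_neq0 prod_neq pos.
have : (p %| (u1 * u2 * A) ^+ 2 - 3 * (2 * B) ^+ 2)%Z.
  rewrite (_ : 3 * _ = u1 * u2 * (v1 * v2) * B ^+ 2); last by rewrite prod12; ring.
  rewrite (_ : _ - _ = u1 * u2 * (u1 * u2 * A ^+ 2 - v1 * v2 * B ^+ 2)); last by ring.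
  exact: dvdz_mull.
move/(dvdz_sqr_sub3 p_pr p12); rewrite Euclid_dvdzM // dvdz_small //.
by have := gt3_of_mod12 p12; lia.
Qed.

(** * Digit vectors on a sphere *)

Definition digval (D : nat) (b : int) (x : 'I_D -> int) : int := \sum_(i < D) x i * b ^+ i.

Lemma digval_comb (D : nat) (b u1 u2 v1 v2 : int) (x y z w : 'I_D -> int) :
  u1 * digval b x + u2 * digval b y - (v1 * digval b z + v2 * digval b w) =
  digval b (fun i => u1 * x i + u2 * y i - (v1 * z i + v2 * w i)).
Proof.
rewrite /digval !mulr_sumr -!big_split -sumrB /=.
by apply: eq_bigr => i _; ring.
Qed.

Lemma digvalS (D : nat) (b : int) (d : 'I_D.+1 -> int) :
  digval b d = d ord0 + b * digval b (fun i => d (lift ord0 i)).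
Proof.
rewrite /digval big_ord_recl expr0 mulr1 mulr_sumr; congr (_ + _).
by apply: eq_bigr => i _; rewrite exprS mulrCA.
Qed.

Lemma norm_digval_le (D : nat) (b : int) (d : 'I_D -> int) : 1 <= b ->
  (forall i, `|d i| <= b - 1) -> `|digval b d| <= b ^+ D - 1.
Proof.
move=> b_ge1; elim: D d => [|D IH] d d_le.
  by rewrite /digval big_ord0 normr0 expr0 subrr.
rewrite digvalS exprS; have := IH _ (fun i => d_le (lift ord0 i)).
set r := digval b _ => r_le; have d0_le := d_le ord0.
apply: (le_trans (ler_normD _ _)); rewrite normrM (ger0_norm (le_trans ler01 b_ge1)).
have := ler_wpM2l (le_trans ler01 b_ge1) r_le; lra.
Qed.

Lemma digval_eq0 (D : nat) (b : int) (d : 'I_D -> int) : 1 < b ->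
  (forall i, `|d i| <= b - 1) -> digval b d = 0 -> forall i, d i = 0.
Proof.
move=> b_gt1; elim: D d => [|D IH] d d_le; first by move=> _ [].
rewrite digvalS; set r := digval b _ => sum0.
have r0 : r = 0.
  apply/eqP; apply: contraTT (d_le ord0) => r_neq0; rewrite -ltNge.
  rewrite (_ : d ord0 = - (b * r)); last by lra.
  rewrite normrN normrM (gtr0_norm (lt_trans ltr01 b_gt1)).
  have : 1 <= `|r| by rewrite -gtz0_ge1 normr_gt0.
  nra.
move: sum0; rewrite r0 mulr0 addr0 => d0 i.
have [j ->|->] := unliftP ord0 i; last exact: d0.
exact: (IH (fun i => d (lift ord0 i))).
Qed.

Lemma balanced_comb_bound (a K u1 u2 v1 v2 x y z w : int) : u1 + u2 = v1 + v2 ->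
  `|u1| + `|u2| + `|v1| + `|v2| <= 2 * a ->
  0 <= x <= K -> 0 <= y <= K -> 0 <= z <= K -> 0 <= w <= K ->
  `|u1 * x + u2 * y - (v1 * z + v2 * w)| <= a * K.
Proof.
move=> sum_eq coef_le x_in y_in z_in w_in.
have K_ge0 : 0 <= K by lra.
have centered c t : 0 <= t <= K -> `|c * (2 * t - K)| <= `|c| * K.
  by move=> t_in; rewrite normrM ler_wpM2l // ler_norml; lra.
(* Since the coefficients sum to zero, the digits may be centered at [K/2]. *)
have two_comb : 2 * (u1 * x + u2 * y - (v1 * z + v2 * w)) =
    u1 * (2 * x - K) + u2 * (2 * y - K) - (v1 * (2 * z - K) + v2 * (2 * w - K)).
  by rewrite (_ : v2 = u1 + u2 - v1); [ring | lra].
have := centered u1 x x_in; have := centered u2 y y_in.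
have := centered v1 z z_in; have := centered v2 w w_in.
rewrite !ler_norml => /andP[? ?] /andP[? ?] /andP[? ?] /andP[? ?].
have : (`|u1| + `|u2| + `|v1| + `|v2|) * K <= 2 * a * K by rewrite ler_wpM2r.
by move=> ?; apply/andP; split; lra.
Qed.

Lemma dvdz_sqr_relation (d u1 u2 v1 v2 X Y Z W : int) : u1 + u2 = v1 + v2 ->
  (d %| u1 * X + u2 * Y - (v1 * Z + v2 * W))%Z ->
  (d %| u1 * X ^+ 2 + u2 * Y ^+ 2 - (v1 * Z ^+ 2 + v2 * W ^+ 2))%Z ->
  (d %| u1 * u2 * (X - Y) ^+ 2 - v1 * v2 * (Z - W) ^+ 2)%Z.
Proof.
move=> sum_eq lin quad.
have -> : u1 * u2 * (X - Y) ^+ 2 - v1 * v2 * (Z - W) ^+ 2 =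
    (u1 + u2) * (u1 * X ^+ 2 + u2 * Y ^+ 2 - (v1 * Z ^+ 2 + v2 * W ^+ 2)) -
    (u1 * X + u2 * Y - (v1 * Z + v2 * W)) * (u1 * X + u2 * Y + (v1 * Z + v2 * W)).
  by rewrite (_ : v2 = u1 + u2 - v1); [ring | lra].
by apply: rpredB; [apply: dvdz_mull | apply: dvdz_mulr].
Qed.

Section BoxSphere.
Variables (D : nat) (b K m : int).
Local Notation digval := (@digval D b).

Definition box_sphere (x : 'I_D -> int) : Prop :=
  (forall i, 0 <= x i <= K) /\ \sum_(i < D) x i ^+ 2 = m.

Definition sqdist (x y : 'I_D -> int) : int := \sum_(i < D) (x i - y i) ^+ 2.

Lemma eq_digval (x y : 'I_D -> int) : (forall i, x i = y i) -> digval x = digval y.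
Proof. by move=> xy_eq; apply: eq_bigr => i _; rewrite xy_eq. Qed.

Lemma sqdist_gt0 (x y : 'I_D -> int) : digval x != digval y -> 0 < sqdist x y.
Proof.
move=> xy_neq; rewrite lt_def sumr_ge0 ?andbT => [|i _]; last exact: sqr_ge0.
apply: contra xy_neq; rewrite psumr_eq0 => [/allP xy_eq|i _]; last exact: sqr_ge0.
apply/eqP/eq_bigr => i _.
by have := xy_eq i (mem_index_enum _); rewrite sqrf_eq0 subr_eq0 => /eqP ->.
Qed.

Lemma sqdist_eq0 (x y : 'I_D -> int) : sqdist x y = 0 -> forall i, x i = y i.
Proof.
rewrite /sqdist => /eqP; rewrite psumr_eq0 => [/allP xy_eq i|i _]; last exact: sqr_ge0.
by have := xy_eq i (mem_index_enum _); rewrite sqrf_eq0 subr_eq0 => /eqP.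
Qed.

Lemma sqnorm_comb (x y : 'I_D -> int) (u1 u2 : int) : box_sphere x -> box_sphere y ->
  \sum_(i < D) (u1 * x i + u2 * y i) ^+ 2 = (u1 + u2) ^+ 2 * m - u1 * u2 * sqdist x y.
Proof.
move=> [_ x_sq] [_ y_sq].
rewrite (_ : _ * m = (u1 + u2) * (u1 * \sum_i x i ^+ 2 + u2 * \sum_i y i ^+ 2)); last first.
  by rewrite x_sq y_sq; ring.
rewrite /sqdist !mulr_sumr -big_split /= mulr_sumr -sumrB.
by apply: eq_bigr => i _; ring.
Qed.

Lemma sqdist_products (x y z w : 'I_D -> int) (u1 u2 v1 v2 : int) :
  box_sphere x -> box_sphere y -> box_sphere z -> box_sphere w -> u1 + u2 = v1 + v2 ->
  (forall i, u1 * x i + u2 * y i = v1 * z i + v2 * w i) ->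
  u1 * u2 * sqdist x y = v1 * v2 * sqdist z w.
Proof.
move=> x_in y_in z_in w_in sum_eq comb_eq.
have : \sum_(i < D) (u1 * x i + u2 * y i) ^+ 2 = \sum_(i < D) (v1 * z i + v2 * w i) ^+ 2.
  by apply: eq_bigr => i _; rewrite comb_eq.
by rewrite !sqnorm_comb // sum_eq => /addrI/oppr_inj.
Qed.

Lemma sqdist_parallelogram (x y z w : 'I_D -> int) :
  box_sphere x -> box_sphere y -> box_sphere z -> box_sphere w ->
  (forall i, x i + y i = z i + w i) -> sqdist x y = sqdist z w.
Proof.
move=> x_in y_in z_in w_in sum_eq.
have := @sqdist_products x y z w 1 1 1 1; rewrite !mul1r; apply => // i.
by rewrite !mul1r.
Qed.
End BoxSphere.

Section Core.
Variables (D p : nat) (a K m k : int).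
Hypotheses (p_pr : prime p) (p12 : ((p %% 12 == 5) || (p %% 12 == 7))%N).
Hypotheses (K_gt0 : 0 < K) (a_ge2 : 2 <= a) (k_le3 : k <= 3) (k2_le_a : 2 * k <= a).
Hypothesis bD_le_p : (a * K + 1) ^+ D <= p%:Z.

Local Notation digval := (@digval D (a * K + 1)).
Local Notation box_sphere := (@box_sphere D K m).

Lemma coef_ndvdz (u : int) : u != 0 -> `|u| <= k -> ~~ (p %| u)%Z.
Proof.
move=> u_neq0 u_le; rewrite dvdz_small ?u_neq0 //.
by have := gt3_of_mod12 p12; rewrite -ltz_nat; move: k_le3 u_le; lra.
Qed.

Lemma coefs_sqr_ndvdz (c1 c2 X Y : int) : c1 != 0 -> c2 != 0 -> `|c1| <= k -> `|c2| <= k ->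
  ~~ (p %| X - Y)%Z -> ~~ (p %| c1 * c2 * (X - Y) ^+ 2)%Z.
Proof.
move=> c1_neq0 c2_neq0 c1_le c2_le XY_ndvd.
by rewrite expr2 !Euclid_dvdzM // (negPf XY_ndvd) !orbF negb_or !coef_ndvdz.
Qed.

Lemma norm_coefs_sum_le (u1 u2 v1 v2 : int) :
  `|u1| <= k -> `|u2| <= k -> `|v1| <= k -> `|v2| <= k -> `|u1| + `|u2| + `|v1| + `|v2| <= 2 * a.
Proof.
move=> *; apply: (@le_trans _ _ (k + k + k + k)); first by rewrite !lerD.
by move: k2_le_a; lra.
Qed.

Lemma digitwise_of_dvdz (x y z w : 'I_D -> int) (u1 u2 v1 v2 : int) :
  box_sphere x -> box_sphere y -> box_sphere z -> box_sphere w ->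
  u1 + u2 = v1 + v2 -> `|u1| + `|u2| + `|v1| + `|v2| <= 2 * a ->
  (p %| u1 * digval x + u2 * digval y - (v1 * digval z + v2 * digval w))%Z ->
  forall i, u1 * x i + u2 * y i = v1 * z i + v2 * w i.
Proof.
move=> [x_box _] [y_box _] [z_box _] [w_box _] sum_eq coef_le.
(* The combination has base-(aK+1) digits of absolute value at most aK, so it is smaller than
   (aK+1)^D <= p in absolute value, and it vanishes digitwise. *)
pose d i := u1 * x i + u2 * y i - (v1 * z i + v2 * w i).
have d_le i : `|d i| <= a * K + 1 - 1 by rewrite addrK balanced_comb_bound.
rewrite digval_comb -/d.
have b_gt1 : 1 < a * K + 1 by rewrite ltrDr mulr_gt0 // (lt_le_trans _ a_ge2).
rewrite dvdz_small; last first.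
  apply: le_lt_trans (norm_digval_le (ltW b_gt1) d_le) _.
  by rewrite ltrBlDr (le_lt_trans bD_le_p) ?ltrDl.
move=> /eqP/(digval_eq0 b_gt1 d_le) d0 i.
by have := d0 i; rewrite /d; lra.
Qed.

Lemma digitwise_sum_of_dvdz (x y z w : 'I_D -> int) :
  box_sphere x -> box_sphere y -> box_sphere z -> box_sphere w ->
  (p %| digval x + digval y - (digval z + digval w))%Z ->
  forall i, x i + y i = z i + w i.
Proof.
move=> x_in y_in z_in w_in sum_dvd i.
have := @digitwise_of_dvdz x y z w 1 1 1 1 x_in y_in z_in w_in erefl.
by rewrite normr1 !mul1r => /(_ ltac:(move: a_ge2; lra) sum_dvd i); rewrite !mul1r.
Qed.

Lemma digval_eq_of_dvdz (x y : 'I_D -> int) : box_sphere x -> box_sphere y ->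
  (p %| digval x - digval y)%Z -> digval x = digval y.
Proof.
move=> x_in y_in XY_dvd; apply: eq_digval => i; apply: (@addIr _ (x i)).
by apply: digitwise_sum_of_dvdz => //; rewrite opprD addrACA subrr addr0.
Qed.

Lemma ndvdz_digval_sub (x y : 'I_D -> int) : box_sphere x -> box_sphere y ->
  digval x != digval y -> ~~ (p %| digval x - digval y)%Z.
Proof. by move=> x_in y_in; apply: contra => /(digval_eq_of_dvdz x_in y_in)->. Qed.

Lemma same_coefs_eq (x y z w : 'I_D -> int) (u1 u2 : int) :
  box_sphere x -> box_sphere y -> box_sphere z -> box_sphere w ->
  u2 != 0 -> u1 + u2 != 0 -> digval x != digval y ->
  (forall i, u1 * x i + u2 * y i = u1 * z i + u2 * w i) ->
  (p %| (digval x - digval y) ^+ 2 - (digval z - digval w) ^+ 2)%Z ->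
  digval x = digval z /\ digval y = digval w \/
  u1 = u2 /\ digval x = digval w /\ digval y = digval z.
Proof.
move=> x_in y_in z_in w_in u2_neq0 s_neq0 xy_neq comb_eq.
rewrite subr_sqr Euclid_dvdzM // => /orP[] pair_dvd.
- have xw_sum := @digitwise_sum_of_dvdz x w y z x_in w_in y_in z_in.
  have {pair_dvd}/xw_sum xw_sum : (p %| digval x + digval w - (digval y + digval z))%Z.
    by rewrite (_ : _ - _ = digval x - digval y - (digval z - digval w)) //; ring.
  have xz_eq i : x i = z i.
    have wE : w i = y i + z i - x i by have := xw_sum i; lra.
    by apply: (mulfI s_neq0); have := comb_eq i; rewrite wE; lra.
  by left; split; apply: eq_digval => i; [exact: xz_eq | have := xw_sum i; rewrite xz_eq; lra].
- have xz_sum := @digitwise_sum_of_dvdz x z y w x_in z_in y_in w_in.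
  have {pair_dvd}/xz_sum xz_sum : (p %| digval x + digval z - (digval y + digval w))%Z.
    by rewrite (_ : _ - _ = digval x - digval y + (digval z - digval w)) //; ring.
  have diff_eq i : u1 * (x i - z i) = u2 * (w i - y i) by have := comb_eq i; lra.
  have : (u1 ^+ 2 - u2 ^+ 2) * sqdist x z = 0.
    rewrite mulrBl {2}(sqdist_parallelogram x_in z_in y_in w_in xz_sum).
    rewrite /sqdist !mulr_sumr -sumrB big1 // => i _.
    by rewrite -!exprMn diff_eq; ring.
  move/eqP; rewrite mulf_eq0 subr_sqr mulf_eq0 (negPf s_neq0) orbF.
  case/orP=> [/eqP/subr0_eq u12 | /eqP/sqdist_eq0 xz].
    have diff_eq' i : x i - z i = w i - y i.
      by apply: (mulfI u2_neq0); rewrite -{1}u12 diff_eq.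
    right; split => //; split; apply: eq_digval => i;
      by have := diff_eq' i; have := xz_sum i; lra.
  case/negP: xy_neq; apply/eqP/eq_digval => i.
  have := diff_eq i; rewrite xz subrr mulr0 => /esym/eqP.
  by rewrite mulf_eq0 (negPf u2_neq0) subr_eq0 => /eqP; have := xz_sum i; rewrite xz; lra.
Qed.

Section Weight2.
Variables (x y z w : 'I_D -> int) (u1 u2 v1 v2 : int).
Hypotheses (x_in : box_sphere x) (y_in : box_sphere y).
Hypotheses (z_in : box_sphere z) (w_in : box_sphere w).
Hypotheses (u1_neq0 : u1 != 0) (u2_neq0 : u2 != 0) (v1_neq0 : v1 != 0) (v2_neq0 : v2 != 0).
Hypotheses (u1_le : `|u1| <= k) (u2_le : `|u2| <= k) (v1_le : `|v1| <= k) (v2_le : `|v2| <= k).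
Hypotheses (xy_neq : digval x != digval y) (zw_neq : digval z != digval w).
Hypothesis sum_eq : u1 + u2 = v1 + v2.
Hypothesis lin_dvd :
  (p %| u1 * digval x + u2 * digval y - (v1 * digval z + v2 * digval w))%Z.
Hypothesis quad_dvd :
  (p %| u1 * digval x ^+ 2 + u2 * digval y ^+ 2 - (v1 * digval z ^+ 2 + v2 * digval w ^+ 2))%Z.

Local Notation X := (digval x).
Local Notation Y := (digval y).
Local Notation Z := (digval z).
Local Notation W := (digval w).
Local Notation weight2_concl := ((u1 = v1 /\ u2 = v2 /\ X = Z /\ Y = W) \/
                                 (u1 = v2 /\ u2 = v1 /\ X = W /\ Y = Z)).

Let comb_eq : forall i, u1 * x i + u2 * y i = v1 * z i + v2 * w i.
Proof. exact: digitwise_of_dvdz (norm_coefs_sum_le u1_le u2_le v1_le v2_le) lin_dvd. Qed.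

Let prod_rel : u1 * u2 * sqdist x y = v1 * v2 * sqdist z w.
Proof. exact: sqdist_products x_in y_in z_in w_in sum_eq comb_eq. Qed.

Let sqr_dvd : (p %| u1 * u2 * (X - Y) ^+ 2 - v1 * v2 * (Z - W) ^+ 2)%Z.
Proof. exact: dvdz_sqr_relation. Qed.

Let xy_ndvd := ndvdz_digval_sub x_in y_in xy_neq.
Let zw_ndvd := ndvdz_digval_sub z_in w_in zw_neq.

Lemma weight2_sum0 : u1 + u2 = 0 -> weight2_concl.
Proof.
move=> s0; have u2E : u2 = - u1 by move: s0; lra.
have v2E : v2 = - v1 by move: s0 sum_eq; lra.
have sum_xy : forall i, x i + y i = z i + w i.
  apply: digitwise_sum_of_dvdz => //.
  have : (p %| u1 * (X - Y) * (X + Y - (Z + W)))%Z.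
    have -> : u1 * (X - Y) * (X + Y - (Z + W)) =
        (u1 * X ^+ 2 + u2 * Y ^+ 2 - (v1 * Z ^+ 2 + v2 * W ^+ 2)) -
        (Z + W) * (u1 * X + u2 * Y - (v1 * Z + v2 * W)).
      by rewrite u2E v2E; ring.
    by apply: rpredB => //; apply: dvdz_mull.
  by rewrite !Euclid_dvdzM // (negPf (coef_ndvdz u1_neq0 u1_le)) (negPf xy_ndvd).
have := prod_rel; rewrite (sqdist_parallelogram x_in y_in z_in w_in sum_xy) u2E v2E.
move=> /(mulIf (lt0r_neq0 (sqdist_gt0 zw_neq))) sqr_eq.
have /eqP : (u1 - v1) * (u1 + v1) = 0 by move: sqr_eq; lra.
rewrite mulf_eq0 => /orP[] /eqP uv1.
- have v1E : v1 = u1 by lra.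
  have diff_eq i : x i - y i = z i - w i.
    by apply: (mulfI u1_neq0); have := comb_eq i; rewrite u2E v2E v1E; lra.
  left; rewrite v1E; split=> //; split=> //; split; apply: eq_digval => i;
    by have := diff_eq i; have := sum_xy i; lra.
- have v1E : v1 = - u1 by lra.
  have diff_eq i : x i - y i = w i - z i.
    by apply: (mulfI u1_neq0); have := comb_eq i; rewrite u2E v2E v1E; lra.
  right; rewrite v1E opprK; split=> //; split=> //; split; apply: eq_digval => i;
    by have := diff_eq i; have := sum_xy i; lra.
Qed.

Lemma weight2_same_prod : u1 + u2 != 0 -> u1 * u2 = v1 * v2 -> weight2_concl.
Proof.
move=> s_neq0 prod_eq.
have sq_dvd : (p %| (X - Y) ^+ 2 - (Z - W) ^+ 2)%Z.
  move: sqr_dvd; rewrite prod_eq -mulrBr !Euclid_dvdzM //.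
  by rewrite (negPf (coef_ndvdz v1_neq0 v1_le)) (negPf (coef_ndvdz v2_neq0 v2_le)).
have /eqP : (u1 - v1) * (u1 - v2) = 0.
  rewrite (_ : _ * _ = v1 * v2 - u1 * u2); first by rewrite prod_eq subrr.
  by rewrite (_ : v2 = u1 + u2 - v1); [ring | move: sum_eq; lra].
rewrite mulf_eq0 => /orP[] /eqP/subr0_eq uv.
- have v2E : v2 = u2 by move: sum_eq; lra.
  have comb_eq' i : u1 * x i + u2 * y i = u1 * z i + u2 * w i by rewrite comb_eq uv v2E.
  have [[XZ YW] | [u12 [XW YZ]]] :=
    same_coefs_eq x_in y_in z_in w_in u2_neq0 s_neq0 xy_neq comb_eq' sq_dvd.
    by left.
  by right; rewrite -uv v2E -u12.
- have v1E : v1 = u2 by move: sum_eq; lra.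
  have comb_eq' i : u1 * x i + u2 * y i = u1 * w i + u2 * z i.
    by rewrite comb_eq uv v1E addrC.
  have sq_dvd' : (p %| (X - Y) ^+ 2 - (W - Z) ^+ 2)%Z by rewrite -[W - Z]opprB sqrrN.
  have [[XW YZ] | [u12 [XZ YW]]] :=
    same_coefs_eq x_in y_in w_in z_in u2_neq0 s_neq0 xy_neq comb_eq' sq_dvd'.
    by right.
  by left; rewrite -uv v1E -u12.
Qed.

Let coefs_small : {subset [:: u1; u2; v1; v2] <= small_coefs}.
Proof. by apply/allP; rewrite /= !mem_small_coefs // (le_trans _ k_le3). Qed.

Lemma weight2_distinct_prod : u1 + u2 != 0 -> u1 * u2 != v1 * v2 -> False.
Proof.
move=> s_neq0 prod_neq; move/negP: zw_ndvd; apply.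
exact: (dvdz_of_distinct_products p_pr p12 coefs_small sum_eq s_neq0 prod_neq prod_rel
  (sqdist_gt0 xy_neq) (sqdist_gt0 zw_neq) sqr_dvd).
Qed.

Lemma weight2_eq : weight2_concl.
Proof.
have [s0 | s_neq0] := eqVneq (u1 + u2) 0; first exact: weight2_sum0.
have [prod_eq | prod_neq] := eqVneq (u1 * u2) (v1 * v2); first exact: weight2_same_prod.
by case: (weight2_distinct_prod s_neq0 prod_neq).
Qed.
End Weight2.

Lemma weight_le2_eq (x y z w : 'I_D -> int) (u1 u2 v1 v2 : int) :
  box_sphere x -> box_sphere y -> box_sphere z -> box_sphere w ->
  u1 != 0 -> v1 != 0 -> `|u1| <= k -> `|u2| <= k -> `|v1| <= k -> `|v2| <= k ->
  (u2 != 0 -> digval x != digval y) -> (v2 != 0 -> digval z != digval w) ->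
  u1 + u2 = v1 + v2 ->
  (p %| u1 * digval x + u2 * digval y - (v1 * digval z + v2 * digval w))%Z ->
  (p %| u1 * digval x ^+ 2 + u2 * digval y ^+ 2 - (v1 * digval z ^+ 2 + v2 * digval w ^+ 2))%Z ->
  (u1 = v1 /\ u2 = v2 /\ digval x = digval z /\ (u2 = 0 \/ digval y = digval w)) \/
  (u1 = v2 /\ u2 = v1 /\ digval x = digval w /\ digval y = digval z).
Proof.
move=> x_in y_in z_in w_in u1_neq0 v1_neq0 u1_le u2_le v1_le v2_le xy_neq zw_neq sum_eq lin quad.
have sqr := dvdz_sqr_relation sum_eq lin quad.
have [u20 | u2_neq0] := eqVneq u2 0; have [v20 | v2_neq0] := eqVneq v2 0.
- have v1E : v1 = u1 by move: sum_eq; rewrite u20 v20 !addr0.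
  move: lin; rewrite u20 v20 v1E !mul0r !addr0 -mulrBr Euclid_dvdzM //.
  rewrite (negPf (coef_ndvdz u1_neq0 u1_le)) => /digval_eq_of_dvdz XZ.
  by left; rewrite XZ //; do 3 ?split => //; left.
- case/negP: (coefs_sqr_ndvdz v1_neq0 v2_neq0 v1_le v2_le
    (ndvdz_digval_sub z_in w_in (zw_neq v2_neq0))).
  by move: sqr; rewrite u20 mulr0 mul0r sub0r rpredN.
- case/negP: (coefs_sqr_ndvdz u1_neq0 u2_neq0 u1_le u2_le
    (ndvdz_digval_sub x_in y_in (xy_neq u2_neq0))).
  by move: sqr; rewrite v20 mulr0 mul0r subr0.
- have [[-> [-> [-> ->]]] | ] := weight2_eq x_in y_in z_in w_in u1_neq0 u2_neq0 v1_neq0 v2_neq0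
    u1_le u2_le v1_le v2_le (xy_neq u2_neq0) (zw_neq v2_neq0) sum_eq lin quad.
    by left; do 3 ?split => //; right.
  by right.
Qed.
End Core.

Lemma combo_two (G : zmodType) (S : seq G) (a1 a2 : 'I_(size S)) (u1 u2 : int) :
  combo [ffun i => u1 *+ (i == a1) + u2 *+ (i == a2)] = S`_a1 *~ u1 + S`_a2 *~ u2.
Proof.
have sum_delta a u : \sum_(i < size S) S`_i *~ (u *+ (i == a)) = S`_a *~ u.
  rewrite (bigD1 a) //= eqxx mulr1n big1 ?addr0 // => i /negPf->.
  by rewrite mulr0n mulr0z.
by rewrite /combo -!sum_delta -big_split; apply: eq_bigr => i _; rewrite ffunE mulrzDr.
Qed.

Lemma pair_mulrz (G1 G2 : zmodType) (x : G1 * G2) (u : int) : x *~ u = (x.1 *~ u, x.2 *~ u).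
Proof. by rewrite -(raddfMz fst) -(raddfMz snd) -surjective_pairing. Qed.

Lemma Zp_intr_eq (q : nat) (z1 z2 : int) : (1 < q)%N ->
  ((z1%:~R : 'Z_q) == z2%:~R) = (q %| z1 - z2)%Z.
Proof.
move=> q_gt1; have natr_eq0 n : ((n%:R : 'Z_q) == 0) = (q %| n)%N.
  by rewrite -(inj_eq val_inj) /= val_Zp_nat.
rewrite -subr_eq0 -intrB; case: (z1 - z2) => n.
  by rewrite -pmulrn natr_eq0.
by rewrite NegzE mulrNz oppr_eq0 -pmulrn natr_eq0.
Qed.

Lemma s_x_comb (kp km p y1 y2 : nat) (u1 u2 : int) :
  s_x kp km p y1 *~ u1 + s_x kp km p y2 *~ u2 =
  ((u1 + u2)%:~R, (u1 * y1%:Z + u2 * y2%:Z)%:~R, (u1 * (y1 ^ 2)%N + u2 * (y2 ^ 2)%N)%:~R).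
Proof.
by rewrite /s_x !pair_mulrz /=; congr (_, _, _) => /=; rewrite intrD ?intrM ?mulrzl.
Qed.

Lemma s_x_comb_eq (kp km p y1 y2 y3 y4 : nat) (u1 u2 v1 v2 : int) :
  (1 < 3 * kp + 2 * km + 1)%N -> (1 < p)%N ->
  (s_x kp km p y1 *~ u1 + s_x kp km p y2 *~ u2 == s_x kp km p y3 *~ v1 + s_x kp km p y4 *~ v2) =
  [&& ((3 * kp + 2 * km + 1)%N %| u1 + u2 - (v1 + v2))%Z,
      (p %| u1 * y1%:Z + u2 * y2%:Z - (v1 * y3%:Z + v2 * y4%:Z))%Z &
      (p %| u1 * (y1 ^ 2)%N + u2 * (y2 ^ 2)%N - (v1 * (y3 ^ 2)%N + v2 * (y4 ^ 2)%N))%Z].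
Proof.
by move=> N_gt1 p_gt1; rewrite !s_x_comb !xpair_eqE !Zp_intr_eq // andbA.
Qed.

Lemma admissible2P (n : nat) (M : {pred int}) (e : {ffun 'I_n -> int}) : admissible M 2 e ->
  exists a1 a2 u1 u2, [/\ e = [ffun i => u1 *+ (i == a1) + u2 *+ (i == a2)], u1 \in M,
    u2 != 0 -> u2 \in M & u2 != 0 -> a1 != a2].
Proof.
case=> e_in; rewrite /wt; set A := [set i | e i != 0] => /andP[A_gt0 A_le2].
have inA i : (i \in A) = (e i != 0) by rewrite inE.
have e0 i : i \notin A -> e i = 0 by rewrite inA negbK => /eqP.
have [/cards1P[a defA] | /cards2P[a1 [a2 [a12 defA]]]] : #|A| == 1%N \/ #|A| == 2%N by lia.
- have ea : e a != 0 by rewrite -inA defA set11.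
  exists a, a, (e a), 0; split; rewrite ?eqxx ?e_in //.
  apply/ffunP => i; rewrite ffunE mul0rn addr0.
  have [->|ia] := eqVneq i a; first by rewrite mulr1n.
  by rewrite mulr0n e0 // defA in_set1 ia.
- have ea1 : e a1 != 0 by rewrite -inA defA !inE eqxx.
  have ea2 : e a2 != 0 by rewrite -inA defA !inE eqxx orbT.
  exists a1, a2, (e a1), (e a2); split; rewrite ?e_in //.
  apply/ffunP => i; rewrite ffunE.
  have [->|ia1] := eqVneq i a1.
    by move: a12; rewrite mulr1n => /negPf->; rewrite mulr0n addr0.
  have [->|ia2] := eqVneq i a2; first by rewrite mulr1n add0r.
  by rewrite !mulr0n addr0 e0 // defA !inE negb_or ia1.
Qed.

Lemma alpha_ge3 (kp : nat) : (3 <= alpha kp)%N.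
Proof. exact: leq_maxr. Qed.

Lemma double_le_alpha (kp : nat) : (2 * kp <= alpha kp)%N.
Proof. by rewrite /alpha expnS expn1; nia. Qed.

Section CmSm.
Variables (kp km D K p m : nat).
Hypotheses (k_le : (km <= kp <= 3)%N) (k_gt0 : (1 <= kp + km)%N) (K_gt0 : (1 <= K)%N).
Hypotheses (p_pr : prime p) (p12 : ((p %% 12 == 5) || (p %% 12 == 7))%N).
Hypothesis bD_le_p : ((alpha kp * K + 1) ^ D <= p)%N.

Local Notation C := (C_m kp K D m).
Local Notation M := (Mset kp km).
Local Notation N := (3 * kp + 2 * km + 1)%N.
Local Notation s_x := (s_x kp km p).
Local Notation a := (alpha kp)%:Z.

Let K_gt0z : 0 < K%:Z. Proof. by rewrite ltz_nat. Qed.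
Let alpha_ge2z : 2 <= a. Proof. by have := alpha_ge3 kp; rewrite -lez_nat; lia. Qed.
Let kp_le3z : kp%:Z <= 3. Proof. by rewrite lez_nat; lia. Qed.
Let double_le_alphaz : 2 * kp%:Z <= a. Proof. by have := double_le_alpha kp; rewrite -lez_nat. Qed.
Let bD_le_pz : (a * K%:Z + 1) ^+ D <= p%:Z.
Proof. by have -> : a * K%:Z + 1 = (alpha kp * K + 1)%N by []; rewrite -!natz -natrX ler_nat. Qed.
Let N_gt1 : (1 < N)%N. Proof. by lia. Qed.
Let p_gt1 : (1 < p)%N. Proof. exact: prime_gt1. Qed.

Lemma Cm_box_sphere y : y \in C ->
  exists x : 'I_D -> int, box_sphere K%:Z m%:Z x /\ y%:Z = digval (a * K%:Z + 1) x.
Proof.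
rewrite mem_undup => /mapP[xs]; rewrite mem_filter => /andP[/eqP sq_eq _] ->.
exists (fun i => (xs i : nat)%:Z); split; first split.
- by move=> i; have := ltn_ord (xs i); lia.
- by rewrite -sq_eq -natz natr_sum; apply: eq_bigr => i _; rewrite natrX natz.
- rewrite /Cval /digval -natz natr_sum; apply: eq_bigr => i _.
  by rewrite natrM natrX !natz.
Qed.

Lemma Cm_eq_of_dvdz y1 y2 : y1 \in C -> y2 \in C -> (p %| y1%:Z - y2%:Z)%Z -> y1 = y2.
Proof.
move=> /Cm_box_sphere[x1 [x1_in e1]] /Cm_box_sphere[x2 [x2_in e2]].
rewrite e1 e2 => /(digval_eq_of_dvdz K_gt0z alpha_ge2z bD_le_pz x1_in x2_in).
by rewrite -e1 -e2 => -[].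
Qed.

Lemma Cm_weight_le2 (y1 y2 y3 y4 : nat) (u1 u2 v1 v2 : int) :
  y1 \in C -> y2 \in C -> y3 \in C -> y4 \in C ->
  u1 != 0 -> v1 != 0 -> `|u1| <= kp%:Z -> `|u2| <= kp%:Z -> `|v1| <= kp%:Z -> `|v2| <= kp%:Z ->
  (u2 != 0 -> y1 != y2) -> (v2 != 0 -> y3 != y4) -> u1 + u2 = v1 + v2 ->
  (p %| u1 * y1%:Z + u2 * y2%:Z - (v1 * y3%:Z + v2 * y4%:Z))%Z ->
  (p %| u1 * (y1 ^ 2)%N + u2 * (y2 ^ 2)%N - (v1 * (y3 ^ 2)%N + v2 * (y4 ^ 2)%N))%Z ->
  (u1 = v1 /\ u2 = v2 /\ y1 = y3 /\ (u2 = 0 \/ y2 = y4)) \/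
  (u1 = v2 /\ u2 = v1 /\ y1 = y4 /\ y2 = y3).
Proof.
move=> /Cm_box_sphere[x1 [x1_in e1]] /Cm_box_sphere[x2 [x2_in e2]].
move=> /Cm_box_sphere[x3 [x3_in e3]] /Cm_box_sphere[x4 [x4_in e4]].
move=> u1_neq0 v1_neq0 u1_le u2_le v1_le v2_le y12_neq y34_neq sum_eq.
have x12_neq : u2 != 0 -> digval (a * K%:Z + 1) x1 != digval (a * K%:Z + 1) x2.
  by move=> /y12_neq; rewrite -e1 -e2 eqz_nat.
have x34_neq : v2 != 0 -> digval (a * K%:Z + 1) x3 != digval (a * K%:Z + 1) x4.
  by move=> /y34_neq; rewrite -e3 -e4 eqz_nat.
have PoszX2 n : ((n ^ 2)%N : int) = n%:Z ^+ 2 by rewrite -!natz natrX.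
rewrite !PoszX2 e1 e2 e3 e4 => lin quad.
have := weight_le2_eq p_pr p12 K_gt0z alpha_ge2z kp_le3z double_le_alphaz bD_le_pz
  x1_in x2_in x3_in x4_in u1_neq0 v1_neq0 u1_le u2_le v1_le v2_le x12_neq x34_neq sum_eq lin quad.
rewrite -e1 -e2 -e3 -e4.
by case=> [[-> [-> [[->] [->|[->]]]]] | [-> [-> [[->] [->]]]]];
  [left; do 3 split=> //; left | left; do 3 split=> //; right | right].
Qed.

Lemma S_m_map : S_m kp km p K D m = map s_x C.
Proof.
rewrite /S_m undup_id // map_inj_in_uniq ?undup_uniq // => y1 y2 y1_in y2_in e.
apply: Cm_eq_of_dvdz => //.
have := congr1 (fun g : Gtype kp km p => g.1.2) e; rewrite /= !pmulrn => /eqP.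
by rewrite Zp_intr_eq.
Qed.

Lemma coef_range (u : int) : (u != 0 -> u \in M) -> - km%:Z <= u <= kp%:Z.
Proof.
move=> u_in; have [-> | /u_in] := eqVneq u 0; last rewrite inE.
all: lia.
Qed.

Lemma coef_norm_le (u : int) : (u != 0 -> u \in M) -> `|u| <= kp%:Z.
Proof. by move=> /coef_range; lia. Qed.

Lemma sub_coef_sums_lt (u1 u2 v1 v2 : int) :
  (u1 != 0 -> u1 \in M) -> (u2 != 0 -> u2 \in M) ->
  (v1 != 0 -> v1 \in M) -> (v2 != 0 -> v2 \in M) ->
  `|u1 + u2 - (v1 + v2)| < N%:Z.
Proof. by move=> /coef_range ? /coef_range ? /coef_range ? /coef_range ?; lia. Qed.

Lemma s_x_comb_neq0 y1 y2 u1 u2 : y1 \in C -> y2 \in C -> u1 \in M ->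
  (u2 != 0 -> u2 \in M) -> (u2 != 0 -> y1 != y2) -> s_x y1 *~ u1 + s_x y2 *~ u2 != 0.
Proof.
move=> y1_in y2_in u1_in u2_in y12_neq.
have := s_x_comb_eq y1 y2 0 0 u1 u2 0 0 N_gt1 p_gt1; rewrite !mulr0z addr0 => ->.
rewrite !mul0r !addr0; apply/and3P => -[sum_dvd lin_dvd _].
have u1_neq0 : u1 != 0 by move: u1_in; rewrite inE => /andP[].
have zero_in : (0 : int) != 0 -> (0 : int) \in M by rewrite eqxx.
have s0 : u1 + u2 = 0.
  have := sub_coef_sums_lt (fun _ => u1_in) u2_in zero_in zero_in.
  by rewrite addr0 => /dvdz_small; rewrite sum_dvd => /esym/eqP.
have u2_neq0 : u2 != 0 by apply: contra_neq u1_neq0 => u20; lia.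
have u1_ndvd : ~~ (p %| u1)%Z.
  rewrite dvdz_small ?u1_neq0 //.
  by have := coef_norm_le (fun _ => u1_in); have := gt3_of_mod12 p12; lia.
move: lin_dvd; rewrite (_ : _ + _ = u1 * (y1%:Z - y2%:Z)); last first.
  by rewrite (_ : u2 = - u1); [ring | lia].
rewrite Euclid_dvdzM // (negPf u1_ndvd) => /(Cm_eq_of_dvdz y1_in y2_in)/eqP.
by rewrite (negPf (y12_neq u2_neq0)).
Qed.

Lemma s_x_comb_inj y1 y2 y3 y4 u1 u2 v1 v2 :
  y1 \in C -> y2 \in C -> y3 \in C -> y4 \in C -> u1 \in M -> v1 \in M ->
  (u2 != 0 -> u2 \in M) -> (v2 != 0 -> v2 \in M) ->
  (u2 != 0 -> y1 != y2) -> (v2 != 0 -> y3 != y4) ->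
  s_x y1 *~ u1 + s_x y2 *~ u2 = s_x y3 *~ v1 + s_x y4 *~ v2 ->
  (u1 = v1 /\ u2 = v2 /\ y1 = y3 /\ (u2 = 0 \/ y2 = y4)) \/
  (u1 = v2 /\ u2 = v1 /\ y1 = y4 /\ y2 = y3).
Proof.
move=> y1_in y2_in y3_in y4_in u1_in v1_in u2_in v2_in y12_neq y34_neq /eqP.
rewrite s_x_comb_eq // => /and3P[sum_dvd lin_dvd quad_dvd].
have sum_eq : u1 + u2 = v1 + v2.
  have := sub_coef_sums_lt (fun _ => u1_in) u2_in (fun _ => v1_in) v2_in.
  by move=> /dvdz_small; rewrite sum_dvd => /esym/eqP/subr0_eq.
apply: Cm_weight_le2 => //; rewrite ?coef_norm_le //.
- by move: u1_in; rewrite inE => /andP[].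
- by move: v1_in; rewrite inE => /andP[].
Qed.

Lemma diamond_S_m : diamond M 2 (S_m kp km p K D m).
Proof.
rewrite S_m_map => e e'.
move=> /admissible2P[a1 [a2 [u1 [u2 [-> u1_in u2_in a12_neq]]]]].
move=> /admissible2P[c1 [c2 [v1 [v2 [-> v1_in v2_in c12_neq]]]]].
pose I := 'I_(size (map s_x C)).
have idx_lt (i : I) : (i < size C)%N by rewrite -(size_map s_x).
have nthS (i : I) : (map s_x C)`_i = s_x (nth 0%N C i) by rewrite (nth_map 0%N) ?idx_lt.
have nth_in (i : I) : nth 0%N C i \in C by rewrite mem_nth ?idx_lt.
have nth_inj (i j : I) : nth 0%N C i = nth 0%N C j -> i = j.
  by move/eqP; rewrite nth_uniq ?idx_lt ?undup_uniq // => /eqP/val_inj.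
have nth_neq (u : int) (i j : I) :
    (u != 0 -> i != j) -> u != 0 -> nth 0%N C i != nth 0%N C j.
  by move=> ij /ij; apply: contra_neq => /nth_inj.
rewrite !combo_two !nthS; split.
  exact: s_x_comb_neq0 (nth_neq _ _ _ a12_neq).
move=> e_neq; apply: contraNneq e_neq => /s_x_comb_inj.
move=> /(_ (nth_in _) (nth_in _) (nth_in _) (nth_in _) u1_in v1_in u2_in v2_in).
move=> /(_ (nth_neq _ _ _ a12_neq) (nth_neq _ _ _ c12_neq)).
case=> [[-> [-> [/nth_inj-> [-> | /nth_inj->]]]] | [-> [-> [/nth_inj-> /nth_inj->]]]].
- by apply/eqP/ffunP => i; rewrite !ffunE !mul0rn.
- by [].
- by apply/eqP/ffunP => i; rewrite !ffunE addrC.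
Qed.
End CmSm.

Theorem theorem12 (kp km D K p : nat) :
  (km <= kp <= 3)%N -> (1 <= kp + km)%N ->
  (2 <= D)%N -> (1 <= K)%N ->
  prime p -> ((p %% 12 == 5) || (p %% 12 == 7))%N ->
  ((alpha kp * K + 1) ^ D <= p)%N ->
  forall m : nat, (m < D * K ^ 2)%N ->
    diamond (Mset kp km) 2 (S_m kp km p K D m).
Proof.
move=> k_le k_gt0 _ K_gt0 p_pr p12 bD_le_p m _.
exact: diamond_S_m.
Qed.
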